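(* Let $\Theta=\{1,2\}$ and let $P_j:\Theta\to\Delta(Y_j)$, $j=1,\dots,m$, be experiments. Then there exists a Blackwell supremum $\overline P$ of $P_1,\dots,P_m$ with $\overline P\in\mathcal P(P_1,\dots,P_m)$. Consequently, for every decision problem $(A,u)$ and every $P\in\mathcal P(P_1,\dots,P_m)$, $V(\overline P;(A,u))\le V(P;(A,u))$.
   Context: $\Theta$ is a finite set of states. A decision problem is a pair $(A,u)$ with $A$ a finite nonempty action set and $u:\Theta\times A\to\mathbb{R}$. An experiment is a map $P:\Theta\to\Delta(Y)$ with $Y$ a finite signal set. Given experiments $P_j:\Theta\to\Delta(Y_j)$, $j=1,\dots,m$, let $\mathbf Y=Y_1\times\cdots\times Y_m$ and let $\mathcal P(P_1,\dots,P_m)$ be the set of experiments $P:\Theta\to\Delta(\mathbf Y)$ such that $\sum_{y_{-j}}P(y_1,\dots,y_m|\theta)=P_j(y_j|\theta)$ for all $\theta$, $j$, $y_j$. For a single experiment $P:\Theta\to\Delta(Y)$ its value is $V(P;(A,u))=\max_{\sigma:Y\to\Delta(A)}\sum_{\theta}\sum_{y}P(y|\theta)\sum_a\sigma(a|y)u(\theta,a)$. An experiment $P$ is more informative than (Blackwell dominates) $Q$ if $V(P;(A,u))\ge V(Q;(A,u))$ for every decision problem $(A,u)$. An experiment $R$ is a Blackwell supremum of $P_1,\dots,P_m$ if $R$ is more informative than every $P_j$, and every experiment $S$ more informative than all $P_j$ is also more informative than $R$. *)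

From HB Require Import structures.
From mathcomp Require Import all_boot all_order all_algebra.
From mathcomp Require Import classical_sets reals.
Set Implicit Arguments. Unset Strict Implicit. Unset Printing Implicit Defensive.
Import Order.TTheory GRing.Theory Num.Theory.
Local Open Scope ring_scope.
Local Open Scope classical_set_scope.

Definition Theta : finType := 'I_2.

Section Blackwell.
Variable R : realType.

Definition is_dist (Y : finType) (p : Y -> R) : Prop :=
  (forall y, 0 <= p y) /\ \sum_(y : Y) p y = 1.

Definition experiment (Y : finType) (P : Theta -> Y -> R) : Prop :=
  forall th : Theta, is_dist (P th).

Definition payoff (Y A : finType) (P : Theta -> Y -> R) (u : Theta -> A -> R)
  (sigma : Y -> A -> R) : R :=
  \sum_(th : Theta) \sum_(y : Y) P th y * \sum_(a : A) sigma y a * u th a.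

(* V(P;(A,u)) = max over sigma : Y -> Delta(A) of the expected payoff
   (written as the supremum of the set of attainable payoffs; it is attained). *)
Definition value (Y A : finType) (P : Theta -> Y -> R) (u : Theta -> A -> R) : R :=
  sup [set x | exists sigma : Y -> A -> R,
                 (forall y, is_dist (sigma y)) /\ x = payoff P u sigma].

Definition more_informative (Y Z : finType) (P : Theta -> Y -> R)
  (Q : Theta -> Z -> R) : Prop :=
  forall (A : finType), (0 < #|A|)%N -> forall u : Theta -> A -> R,
    value Q u <= value P u.

Definition blackwell_sup (m : nat) (Y : 'I_m -> finType)
  (P : forall j, Theta -> Y j -> R) (Z : finType) (Rb : Theta -> Z -> R) : Prop :=
  experiment Rb /\
  (forall j, more_informative Rb (P j)) /\
  (forall (Z' : finType) (S : Theta -> Z' -> R), experiment S ->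
     (forall j, more_informative S (P j)) -> more_informative S Rb).

Definition prodY (m : nat) (Y : 'I_m -> finType) : finType :=
  {dffun forall j : 'I_m, Y j}.

Definition in_couplings (m : nat) (Y : 'I_m -> finType)
  (P : forall j, Theta -> Y j -> R) (Q : Theta -> prodY Y -> R) : Prop :=
  experiment Q /\
  forall (th : Theta) (j : 'I_m) (yj : Y j),
    \sum_(y : prodY Y | y j == yj) Q th y = P j th yj.

End Blackwell.

From HB Require Import structures.
From mathcomp Require Import all_boot all_order all_algebra.
From mathcomp Require Import classical_sets reals topology normedtype derive.
From mathcomp Require Import ring lra.
Import Order.TTheory GRing.Theory Num.Theory.
Import numFieldNormedType.Exports.
Local Open Scope ring_scope.
Set Implicit Arguments. Unset Strict Implicit. Unset Printing Implicit Defensive.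

(* With two states, the value of any decision problem is a nonnegative
   combination of values of the two-action "betting" problems: the best
   expected utility, as a function of the posterior, is the upper envelope of
   finitely many lines, i.e. a convex piecewise-linear function (plfun), and
   every such function is a sum of hinges (x - t)_+.  Hence P is more
   informative than Q iff the hinge function hingeV P dominates hingeV Q.

   The upper envelope of the hinge functions of P_1, ..., P_m is again of the
   shape of a hinge function, and an explicit experiment E realizes it; E is a
   Blackwell supremum of the P_j (on its own signal set).  Blackwell's theorem
   (proved by minimizing the distance between Q and the garblings of E over
   the compact set of stochastic kernels) gives kernels K_j with P_j = E K_j;
   garbling E by the conditionally independent product of the K_j yields a
   coupling Pbar of the P_j that is still a Blackwell supremum.  Finally every
   coupling dominates its marginals, so Pbar is below every coupling. *)

Section Values.
Variable R : realType.

Definition t0 : Theta := @Ordinal 2 0 isT.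
Definition t1 : Theta := @Ordinal 2 1 isT.

Lemma sumTheta (F : Theta -> R) : \sum_(th : Theta) F th = F t0 + F t1.
Proof.
rewrite /Theta big_ord_recl big_ord_recl big_ord0 addr0.
by congr (F _ + F _); apply: val_inj.
Qed.

Lemma theta_cases (th : Theta) : th = t0 \/ th = t1.
Proof. by case: th => -[|[|n]] hn; [left|right|by []]; apply: val_inj. Qed.

Definition stochastic (Z W : finType) (K : Z -> W -> R) : Prop :=
  forall z, is_dist (K z).

Definition pure (Z W : finType) (f : Z -> W) : Z -> W -> R :=
  fun z w => (w == f z)%:R.

Lemma pure_stochastic (Z W : finType) (f : Z -> W) : stochastic (pure f).
Proof.
move=> z; split=> [w|]; first by rewrite ler0n.
by rewrite (bigD1 (f z)) //= /pure eqxx big1 ?addr0 // => w /negbTE ->.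
Qed.

Lemma sum_pure (Z W : finType) (f : Z -> W) (z : Z) (F : W -> R) :
  \sum_w pure f z w * F w = F (f z).
Proof.
rewrite (bigD1 (f z)) //= /pure eqxx mul1r big1 ?addr0 // => w /negbTE ->.
by rewrite mul0r.
Qed.

Lemma dist_mean_le (A : finType) (p F : A -> R) (M : R) :
  is_dist p -> (forall a, F a <= M) -> \sum_a p a * F a <= M.
Proof.
move=> [p0 p1] FM; rewrite -[M]mul1r -p1 mulr_suml.
by apply: ler_sum => a _; apply: ler_wpM2l.
Qed.

Lemma pointwise_argmax (Y A : finType) (F : Y -> A -> R) : (0 < #|A|)%N ->
  exists ag : Y -> A, forall y a, F y a <= F y (ag y).
Proof.
case/card_gt0P=> a0 _.
apply: (@fin_all_exists Y (fun=> A) (fun y b => forall a, F y a <= F y b)) => y.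
by case: (@arg_maxP _ R A a0 xpredT (F y) isT) => b _ Hb; exists b => a; apply: Hb.
Qed.

Variables (Y A : finType) (P : Theta -> Y -> R) (u : Theta -> A -> R).

Definition lpay (y : Y) (a : A) : R := \sum_th P th y * u th a.

Lemma payoffE (sigma : Y -> A -> R) :
  payoff P u sigma = \sum_y \sum_a sigma y a * lpay y a.
Proof.
rewrite /payoff exchange_big /=; apply: eq_bigr => y _.
under eq_bigr do rewrite big_distrr /=.
rewrite exchange_big /=; apply: eq_bigr => a _.
by rewrite /lpay big_distrr /=; apply: eq_bigr => th _; rewrite mulrCA.
Qed.

Lemma value_argmax (ag : Y -> A) : (forall y a, lpay y a <= lpay y (ag y)) ->
  value P u = \sum_y lpay y (ag y).
Proof.
move=> agmax.
have pay_le sigma : (forall y, is_dist (sigma y)) ->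
    payoff P u sigma <= \sum_y lpay y (ag y).
  by move=> Hs; rewrite payoffE; apply: ler_sum => y _; apply: dist_mean_le.
set Ex := [set x | exists sigma : Y -> A -> R,
  (forall y, is_dist (sigma y)) /\ x = payoff P u sigma]%classic.
have attained : Ex (\sum_y lpay y (ag y)).
  exists (pure ag); split; first exact: pure_stochastic.
  by rewrite payoffE; apply: eq_bigr => y _; rewrite sum_pure.
have ub : ubound Ex (\sum_y lpay y (ag y)) by move=> x [sigma [Hs ->]]; apply: pay_le.
apply/le_anti/andP; split; first by apply: ge_sup ub; exists (\sum_y lpay y (ag y)).
by apply: sup_upper_bound => //; split; exists (\sum_y lpay y (ag y)).
Qed.

Definition ismax (I : Type) (Pr : I -> Prop) (F : I -> R) (M : R) : Prop :=
  (exists2 i, Pr i & F i = M) /\ (forall i, Pr i -> F i <= M).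

Lemma value_eq (g : Y -> R) : (forall y, ismax (fun _ => True) (lpay y) (g y)) ->
  value P u = \sum_y g y.
Proof.
move=> Hg.
have [ag Hag] : exists ag : Y -> A, forall y, lpay y (ag y) = g y.
  apply: (@fin_all_exists Y (fun=> A) (fun y a => lpay y a = g y)) => y.
  by have [[a _ Ha] _] := Hg y; exists a.
rewrite (@value_argmax ag); last by move=> y a; rewrite Hag; case: (Hg y) => _; apply.
by apply: eq_bigr => y _; rewrite Hag.
Qed.

Lemma value_attained : (0 < #|A|)%N ->
  exists2 sigma, stochastic sigma & value P u = payoff P u sigma.
Proof.
move=> cA; have [ag Hag] := pointwise_argmax lpay cA.
exists (pure ag); first exact: pure_stochastic.
by rewrite (value_argmax Hag) payoffE; apply: eq_bigr => y _; rewrite sum_pure.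
Qed.

Lemma payoff_le_value (sigma : Y -> A -> R) : (0 < #|A|)%N ->
  stochastic sigma -> payoff P u sigma <= value P u.
Proof.
move=> cA Hs; have [ag Hag] := pointwise_argmax lpay cA.
by rewrite (value_argmax Hag) payoffE; apply: ler_sum => y _; apply: dist_mean_le.
Qed.

End Values.
Arguments pure {R Z W} f.

Section Garbling.
Variable R : realType.

Definition garble (Z W : finType) (E : Theta -> Z -> R) (K : Z -> W -> R) :
  Theta -> W -> R := fun th w => \sum_z E th z * K z w.

Lemma informative_trans (X1 X2 X3 : finType) (P1 : Theta -> X1 -> R)
    (P2 : Theta -> X2 -> R) (P3 : Theta -> X3 -> R) :
  more_informative P1 P2 -> more_informative P2 P3 -> more_informative P1 P3.
Proof. by move=> h12 h23 A cA u; apply: le_trans (h23 A cA u) (h12 A cA u). Qed.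

Variables (Z W : finType) (K : Z -> W -> R).
Hypothesis HK : stochastic K.

Lemma stochastic_compose (A : finType) (sigma : W -> A -> R) : stochastic sigma ->
  stochastic (fun z a => \sum_w K z w * sigma w a).
Proof.
move=> Hs z; have [K0 K1] := HK z; split=> [a|].
  by apply: sumr_ge0 => w _; apply: mulr_ge0 => //; case: (Hs w) => + _; apply.
rewrite exchange_big /= -K1; apply: eq_bigr => w _.
by rewrite -mulr_sumr; case: (Hs w) => _ ->; rewrite mulr1.
Qed.

Lemma garble_experiment (E : Theta -> Z -> R) : experiment E -> experiment (garble E K).
Proof.
move=> HE th; have [E0 E1] := HE th; split=> [w|].
  by apply: sumr_ge0 => z _; apply: mulr_ge0 => //; case: (HK z) => + _; apply.
rewrite exchange_big /= -E1; apply: eq_bigr => z _.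
by rewrite -mulr_sumr; case: (HK z) => _ ->; rewrite mulr1.
Qed.

Lemma payoff_garble (A : finType) (E : Theta -> Z -> R) (u : Theta -> A -> R)
    (sigma : W -> A -> R) :
  payoff (garble E K) u sigma = payoff E u (fun z a => \sum_w K z w * sigma w a).
Proof.
rewrite /payoff; apply: eq_bigr => th _; rewrite /garble.
under eq_bigr do rewrite mulr_suml.
rewrite exchange_big /=; apply: eq_bigr => z _.
under eq_bigr do rewrite -mulrA.
rewrite -mulr_sumr; congr (_ * _).
under [RHS]eq_bigr do rewrite mulr_suml.
rewrite exchange_big /=; apply: eq_bigr => w _.
by rewrite mulr_sumr; apply: eq_bigr => a _; rewrite mulrA.
Qed.

Lemma informative_garble (E : Theta -> Z -> R) : more_informative E (garble E K).
Proof.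
move=> A cA u; have [sigma Hs ->] := value_attained (garble E K) u cA.
by rewrite payoff_garble; apply: payoff_le_value => //; apply: stochastic_compose.
Qed.

End Garbling.

Section PiecewiseLinear.
Variable R : realType.

Definition hinge (x c : R) : R := Num.max 0 (x - c).

Lemma hingeE_ge x c : c <= x -> hinge x c = x - c.
Proof. by move=> h; rewrite /hinge max_r // subr_ge0. Qed.

Lemma hingeE_le x c : x <= c -> hinge x c = 0.
Proof. by move=> h; rewrite /hinge max_l // subr_le0. Qed.

Lemma hinge_ge0 x c : 0 <= hinge x c.
Proof. by rewrite /hinge le_max lexx. Qed.

(* The convex piecewise-linear function  x |-> A + B x + sum_k c_k (x - t_k)_+,
   the pair k = (c_k, t_k) recording a kink at t_k with slope increment c_k. *)
Definition plfun (A B : R) (ks : seq (R * R)) (x : R) : R :=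
  A + B * x + \sum_(k <- ks) k.1 * hinge x k.2.

Definition good_kinks (ks : seq (R * R)) : bool :=
  all (fun k => (0 <= k.1) && (0 < k.2 < 1)) ks.

Definition slope_below (B : R) (ks : seq (R * R)) (c : R) : R :=
  B + \sum_(k <- ks | k.2 < c) k.1.

Lemma plfun_continuous A B ks : continuous (plfun A B ks).
Proof.
move=> x; apply: cvgD.
  by apply: cvgD; [exact: cvg_cst | apply: cvgM; [exact: cvg_cst | exact: cvg_id]].
apply: (@cvg_big R (R * R)%type +%R 0 xpredT add_continuous) => // k _.
apply: cvgM; first exact: cvg_cst.
apply: (@continuous_max R R (fun=> 0) (fun y => y - k.2)); first exact: cst_continuous.
by apply: cvgB; [exact: cvg_id | exact: cvg_cst].
Qed.

Lemma plfun_below A B ks c x : x <= c ->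
  plfun A B ks x = A + B * x + \sum_(k <- ks | k.2 < c) k.1 * hinge x k.2.
Proof.
move=> xc; rewrite /plfun (bigID (fun k => k.2 < c)) /=.
rewrite [\sum_(k <- ks | ~~ _) _]big1 ?addr0 // => k; rewrite -leNgt => ck.
by rewrite hingeE_le ?mulr0 // (le_trans xc ck).
Qed.

Lemma sum_kinks_below ks c x : c <= x ->
  \sum_(k <- ks | k.2 < c) k.1 * hinge x k.2 =
  \sum_(k <- ks | k.2 < c) k.1 * hinge c k.2 + (x - c) * \sum_(k <- ks | k.2 < c) k.1.
Proof.
move=> cx; rewrite big_distrr -big_split /=; apply: eq_bigr => k kc.
by rewrite !hingeE_ge ?(ltW kc) ?(le_trans (ltW kc) cx) //; ring.
Qed.

Lemma plfun_growth A B ks c x : good_kinks ks -> c <= x ->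
  slope_below B ks c * (x - c) <= plfun A B ks x - plfun A B ks c.
Proof.
move=> gks cx; rewrite (plfun_below A B ks (lexx c)) /plfun /slope_below.
rewrite [\sum_(k <- ks) _](bigID (fun k => k.2 < c)) /= sum_kinks_below //.
have : 0 <= \sum_(k <- ks | ~~ (k.2 < c)) k.1 * hinge x k.2.
  rewrite big_seq_cond; apply: sumr_ge0 => k /andP[kin _].
  have /allP/(_ k kin)/andP[k1 _] := gks.
  by apply: mulr_ge0 => //; apply: hinge_ge0.
rewrite mulrDl; lra.
Qed.

(* Replacing plfun right of c by the affine continuation of slope s. *)
Definition glue (B : R) (ks : seq (R * R)) (c s : R) : seq (R * R) :=
  [seq k <- ks | k.2 < c] ++ [:: (s - slope_below B ks c, c)].

Lemma good_glue B ks c s : good_kinks ks -> 0 < c < 1 -> slope_below B ks c <= s ->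
  good_kinks (glue B ks c s).
Proof.
move=> gks /andP[c0 c1] sc; rewrite /good_kinks all_cat all_filter /= c0 c1 subr_ge0 sc.
by rewrite !andbT; apply/allP => k kin; apply/implyP => _; apply: (allP gks).
Qed.

Lemma plfun_glue_left A B ks c s x : x <= c ->
  plfun A B (glue B ks c s) x = plfun A B ks x.
Proof.
move=> xc; rewrite (plfun_below A B ks xc) /plfun big_cat big_seq1 big_filter /=.
by rewrite hingeE_le // mulr0 addr0.
Qed.

Lemma plfun_glue_right A B ks c s x : c <= x ->
  plfun A B (glue B ks c s) x = plfun A B ks c + s * (x - c).
Proof.
move=> cx; rewrite (plfun_below A B ks (lexx c)) /plfun big_cat big_seq1 big_filter /=.
by rewrite hingeE_ge // sum_kinks_below // /slope_below; ring.
Qed.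

(* The maximum of a plfun f and an affine function l such that f - l is
   nonincreasing on [0, 1] is again a plfun on [0, 1]: either one of them
   dominates, or they cross at some c in ]0, 1[ and the maximum follows f up
   to c and l afterwards. *)
Lemma plfun_max_affine A B ks (p s : R) : good_kinks ks ->
  (forall x y, 0 <= x <= y -> y <= 1 ->
     plfun A B ks y - (p + s * y) <= plfun A B ks x - (p + s * x)) ->
  exists A' B' ks', good_kinks ks' /\ forall x, 0 <= x <= 1 ->
    plfun A' B' ks' x = Num.max (plfun A B ks x) (p + s * x).
Proof.
move=> gks; set f := plfun A B ks => gap_decr.
have [f1|l1] := leP (p + s * 1) (f 1).
  exists A, B, ks; split=> // x /andP[x0 x1]; rewrite max_l //.
  by have := gap_decr x 1 (introT andP (conj x0 x1)) (lexx _); lra.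
have [l0|f0] := leP (f 0) (p + s * 0).
  exists p, s, [::]; split=> // x /andP[x0 x1]; rewrite max_r; last first.
    by have := gap_decr 0 x (introT andP (conj (lexx _) x0)) x1; lra.
  by rewrite /plfun big_nil addr0.
have [c c01 fc] : exists2 c, c \in `[0, 1] & f c - (p + s * c) = 0.
  apply: IVT; first exact: ler01.
    apply: continuous_subspaceT => x; apply: cvgB; first exact: plfun_continuous.
    by apply: cvgD; [exact: cvg_cst | apply: cvgM; [exact: cvg_cst | exact: cvg_id]].
  by rewrite ge_min le_max; apply/andP; split; apply/orP; [right | left]; lra.
move: c01; rewrite in_itv /= => /andP[c0 c1].
have c_gt0 : 0 < c by rewrite lt_def c0 andbT; apply/eqP => c_eq; move: fc f0; rewrite -c_eq; lra.
have c_lt1 : c < 1 by rewrite lt_def c1 andbT; apply/eqP => c_eq; move: fc l1; rewrite c_eq; lra.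
have slope_lt : slope_below B ks c < s.
  have := plfun_growth A B gks (ltW c_lt1); rewrite -/f => growth.
  have pos : 0 < 1 - c by rewrite subr_gt0.
  rewrite -(ltr_pM2r pos); move: l1 fc; lra.
exists A, B, (glue B ks c s); split; first by apply: good_glue; rewrite ?c_gt0 ?(ltW slope_lt).
move=> x /andP[x0 x1]; have [xc|cx] := leP x c.
  rewrite plfun_glue_left // max_l //.
  by have := gap_decr x c (introT andP (conj x0 xc)) c1; lra.
rewrite plfun_glue_right ?(ltW cx) // max_r.
  by rewrite -/f; move: fc; lra.
by have := gap_decr c x (introT andP (conj c0 (ltW cx))) x1; lra.
Qed.

End PiecewiseLinear.

Section Envelope.
Variables (R : realType) (I : finType) (p s : I -> R).

Definition lin (i : I) (x : R) : R := p i + s i * x.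

Definition envelope (J : {set I}) (f : R -> R) : Prop :=
  forall x, 0 <= x <= 1 -> ismax (fun i => i \in J) (fun i => lin i x) (f x).

Lemma envelope_gap (J : {set I}) (f : R -> R) (b : I) : envelope J f -> (forall i, i \in J -> s i <= s b) ->
  forall x y, 0 <= x <= y -> y <= 1 -> f y - lin b y <= f x - lin b x.
Proof.
move=> envf steep x y /andP[x0 xy] y1.
have hx : 0 <= x <= 1 by rewrite x0 (le_trans xy y1).
have hy : 0 <= y <= 1 by rewrite (le_trans x0 xy) y1.
have [[a aJ <-] _] := envf y hy; have [_ fx] := envf x hx.
have := fx a aJ; have := steep a aJ; rewrite /lin; nra.
Qed.

Lemma envelope_insert (J : {set I}) (f g : R -> R) (b : I) : b \in J -> envelope (J :\ b) f ->
  (forall x, 0 <= x <= 1 -> g x = Num.max (f x) (lin b x)) -> envelope J g.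
Proof.
move=> bJ envf gE x hx; rewrite gE //; have [[a aJ fa] fub] := envf x hx; split.
  have [bf|fb] := leP (lin b x) (f x); last by exists b.
  by exists a => //; move: aJ; rewrite in_setD1 => /andP[].
move=> i iJ; rewrite le_max; case: (eqVneq i b) => [->|ib]; first by rewrite lexx orbT.
by rewrite fub // in_setD1 ib.
Qed.

(* The envelope of a nonempty finite family of lines is a plfun; the lines are
   inserted by increasing slope. *)
Lemma envelope_plfun n (J : {set I}) : #|J| = n.+1 ->
  exists A B ks, good_kinks ks /\ envelope J (plfun A B ks).
Proof.
elim: n J => [|n IH] J cJ.
  have [b ->] : exists b, J = [set b] by apply/cards1P/eqP.
  exists (p b), (s b), [::]; split=> // x _; rewrite /plfun big_nil addr0.
  by split=> [|i]; [exists b; rewrite ?inE | rewrite inE => /eqP ->].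
have [i0 i0J] : exists i0, i0 \in J by apply/card_gt0P; rewrite cJ.
case: (@arg_maxP _ R I i0 (mem J) s i0J) => b bJ' steepest.
have bJ : b \in J := bJ'.
have cJb : #|J :\ b| = n.+1 by move: cJ; rewrite (cardsD1 b J) bJ add1n => -[].
have [A [B [ks [gks envf]]]] := IH _ cJb.
have steep i : i \in J :\ b -> s i <= s b by rewrite in_setD1 => /andP[_ /steepest].
have [A' [B' [ks' [gks' maxE]]]] :=
  plfun_max_affine (p := p b) (s := s b) gks (envelope_gap envf steep).
by exists A', B', ks'; split=> //; apply: envelope_insert bJ envf maxE.
Qed.

End Envelope.

Section HingeDecomposition.
Variable R : realType.

(* The hinge function of an experiment: hingeV X l is the value of betting
   on state t1 at odds l (see value_bet below). *)
Definition hingeV (Z : finType) (X : Theta -> Z -> R) (l : R) : R :=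
  \sum_z Num.max 0 (l * X t1 z - (1 - l) * X t0 z).

Lemma hingeV_lower_bounds (Z : finType) (S : Theta -> Z -> R) l :
  experiment S -> 0 <= hingeV S l /\ 2 * l - 1 <= hingeV S l.
Proof.
move=> HS; split; first by apply: sumr_ge0 => z _; rewrite le_max lexx.
have [_ sum0] := HS t0; have [_ sum1] := HS t1.
apply: (@le_trans _ _ (\sum_z (l * S t1 z - (1 - l) * S t0 z))).
  by rewrite sumrB -!big_distrr /= sum0 sum1; lra.
by apply: ler_sum => z _; rewrite le_max lexx orbT.
Qed.

(* The degree-one homogeneous extension of plfun A B ks to pairs of weights:
   hplfun A B ks x0 x1 = (x0 + x1) * plfun A B ks (x1 / (x0 + x1)). *)
Definition hplfun (A B : R) (ks : seq (R * R)) (x0 x1 : R) : R :=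
  A * x0 + (A + B) * x1 + \sum_(k <- ks) k.1 * Num.max 0 ((1 - k.2) * x1 - k.2 * x0).

Lemma ismax_scale (I : Type) (Pr : I -> Prop) (F : I -> R) M w :
  0 <= w -> ismax Pr F M -> ismax Pr (fun i => w * F i) (w * M).
Proof.
move=> w0 [[i Pi <-] H]; split; first by exists i.
by move=> j Pj; apply: ler_wpM2l => //; apply: H.
Qed.

Lemma ismax_ext (I : Type) (Pr Pr' : I -> Prop) (F G : I -> R) M N :
  (forall i, Pr i <-> Pr' i) -> (forall i, F i = G i) -> M = N ->
  ismax Pr F M -> ismax Pr' G N.
Proof.
move=> PP FG <- [[i Pi Fi] H]; split; first by exists i; [apply/(PP i) | rewrite -FG].
by move=> j Pj; rewrite -FG; apply: H; apply/(PP j).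
Qed.

(* With two states, the best expected utility of a decision problem, as a
   function of the weights x0, x1 of the states, is a homogeneous plfun: it is
   the envelope of the lines a |-> u t0 a + (u t1 a - u t0 a) x, rescaled. *)
Lemma best_utility_hplfun (A : finType) (u : Theta -> A -> R) : (0 < #|A|)%N ->
  exists A0 B0 ks, good_kinks ks /\ forall x0 x1, 0 <= x0 -> 0 <= x1 ->
    ismax (fun _ => True) (fun a => x0 * u t0 a + x1 * u t1 a) (hplfun A0 B0 ks x0 x1).
Proof.
move=> cA; have [a0 _] := card_gt0P cA.
have cAT : #|[set: A]| = (#|A|.-1).+1 by rewrite cardsT prednK.
have [A0 [B0 [ks [gks envA]]]] := envelope_plfun (fun a => u t0 a) (fun a => u t1 a - u t0 a) cAT.
exists A0, B0, ks; split=> // x0 x1 x0_ge0 x1_ge0.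
have [w0|wpos] := eqVneq (x0 + x1) 0.
  have [-> ->] : x0 = 0 /\ x1 = 0 by split; lra.
  have -> : hplfun A0 B0 ks 0 0 = 0.
    rewrite /hplfun !mulr0 big1 ?addr0 // => k _.
    by rewrite !mulr0 subrr maxxx mulr0.
  by split=> [|a _]; [exists a0 => // | idtac]; rewrite !mul0r addr0.
have wp : 0 < x0 + x1 by rewrite lt_def wpos; lra.
set l := x1 / (x0 + x1).
have hl : 0 <= l <= 1 by rewrite /l divr_ge0 ?ler_pdivrMr ?mul1r //=; lra.
apply: ismax_ext (ismax_scale (ltW wp) (envA l hl)) => [a|a|].
- by rewrite inE.
- by rewrite /lin /l; field; rewrite wpos.
rewrite /plfun /hplfun mulrDr big_distrr /=; congr (_ + _).
  by rewrite /l; field; rewrite wpos.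
apply: eq_bigr => k _; rewrite mulrCA; congr (_ * _).
rewrite /hinge maxr_pMr ?(ltW wp) // mulr0; congr (Num.max _ _).
by rewrite /l; field; rewrite wpos.
Qed.

Lemma value_hinge_decomp (Z A : finType) (X : Theta -> Z -> R) (u : Theta -> A -> R)
    A0 B0 ks : experiment X ->
  (forall x0 x1, 0 <= x0 -> 0 <= x1 ->
    ismax (fun _ => True) (fun a => x0 * u t0 a + x1 * u t1 a) (hplfun A0 B0 ks x0 x1)) ->
  value X u = A0 + (A0 + B0) + \sum_(k <- ks) k.1 * hingeV X (1 - k.2).
Proof.
move=> HX best.
rewrite (@value_eq R Z A X u (fun z => hplfun A0 B0 ks (X t0 z) (X t1 z))); last first.
  move=> z; have [X0 _] := HX t0; have [X1 _] := HX t1.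
  by apply: ismax_ext (best _ _ (X0 z) (X1 z)) => // a; rewrite /lpay sumTheta.
have [_ sum0] := HX t0; have [_ sum1] := HX t1.
rewrite /hplfun big_split big_split /= -!big_distrr /= sum0 sum1 !mulr1.
congr (_ + _); rewrite exchange_big /=; apply: eq_bigr => k _.
rewrite /hingeV big_distrr /=; apply: eq_bigr => z _.
by congr (_ * Num.max 0 (_ - _)); congr (_ * _); ring.
Qed.

Lemma informative_of_hinge (Z Y : finType) (X : Theta -> Z -> R) (Q : Theta -> Y -> R) :
  experiment X -> experiment Q ->
  (forall l, 0 <= l <= 1 -> hingeV Q l <= hingeV X l) -> more_informative X Q.
Proof.
move=> HX HQ hingeXQ A cA u.
have [A0 [B0 [ks [gks best]]]] := best_utility_hplfun u cA.
rewrite (value_hinge_decomp HX best) (value_hinge_decomp HQ best) lerD2l.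
rewrite !big_seq; apply: ler_sum => k kin.
have /allP/(_ k kin)/andP[k1 /andP[k20 k21]] := gks.
by apply: ler_wpM2l => //; apply: hingeXQ; apply/andP; split; lra.
Qed.

Definition bet (l : R) : Theta -> bool -> R :=
  fun th a => if a then (if th == t1 then l else - (1 - l)) else 0.

Lemma value_bet (Z : finType) (X : Theta -> Z -> R) l : value X (bet l) = hingeV X l.
Proof.
apply: value_eq => z.
have payE a : lpay X (bet l) z a = if a then l * X t1 z - (1 - l) * X t0 z else 0.
  rewrite /lpay sumTheta /bet; case: a; last by rewrite !mulr0 addr0.
  have -> : (t0 == t1) = false by [].
  by rewrite eqxx; ring.
have [h|h] := leP 0 (l * X t1 z - (1 - l) * X t0 z).
  by split=> [|a _]; [exists true => //; rewrite payE | rewrite payE; case: a].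
by split=> [|a _]; [exists false => //; rewrite payE | rewrite payE; case: a => //; apply: ltW].
Qed.

Lemma hinge_of_informative (Z Y : finType) (S : Theta -> Z -> R) (X : Theta -> Y -> R) l :
  more_informative S X -> hingeV X l <= hingeV S l.
Proof. by move=> SX; rewrite -!value_bet; apply: SX; rewrite card_bool. Qed.

End HingeDecomposition.

Section HingeRealization.
Variable R : realType.

Lemma kinks_lower_bound (ks : seq (R * R)) : good_kinks ks ->
  exists2 l, 0 < l <= 1 & forall k, k \in ks -> l <= k.2.
Proof.
elim: ks => [|k ks IH] /=; first by exists 1; rewrite ?ltr01 ?lexx.
case/andP=> /andP[_ /andP[k0 _]] /IH[l /andP[l0 l1] lk].
exists (Num.min l k.2); first by rewrite lt_min l0 k0 ge_min l1.
by move=> k'; rewrite inE => /orP[/eqP->|/lk lk']; rewrite ge_min ?lexx ?orbT ?lk'.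
Qed.

Lemma kinks_upper_bound (ks : seq (R * R)) : good_kinks ks ->
  exists2 l, 0 <= l < 1 & forall k, k \in ks -> k.2 <= l.
Proof.
elim: ks => [|k ks IH] /=; first by exists 0; rewrite ?ltr01 ?lexx.
case/andP=> /andP[_ /andP[_ k1]] /IH[l /andP[l0 l1] lk].
exists (Num.max l k.2); first by rewrite le_max l0 gt_max l1 k1.
by move=> k'; rewrite inE => /orP[/eqP->|/lk lk']; rewrite le_max ?lexx ?orbT ?lk'.
Qed.

(* A plfun lying above 0 and above x |-> 2x - 1 on [0, 1], with f 0 <= 0 and
   f 1 <= 1, vanishes at 0, is nondecreasing at 0, equals 1 at 1, and its
   kinks carry total mass sum_k c_k t_k <= 1. These are the constraints
   realizable by an experiment (see hinge_exp below). *)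
Lemma plfun_hinge_shape (A B : R) (ks : seq (R * R)) : good_kinks ks ->
  (forall l, 0 <= l <= 1 -> 0 <= plfun A B ks l /\ 2 * l - 1 <= plfun A B ks l) ->
  plfun A B ks 0 <= 0 -> plfun A B ks 1 <= 1 ->
  [/\ A = 0, 0 <= B, B + \sum_(k <- ks) k.1 * (1 - k.2) = 1
    & \sum_(k <- ks) k.1 * k.2 <= 1].
Proof.
move=> gks above f0 f1.
have kP k : k \in ks -> 0 <= k.1 /\ 0 < k.2 < 1.
  by move=> kin; have /allP/(_ k kin)/andP[-> ->] := gks.
have inactive l : (forall k, k \in ks -> l <= k.2) -> plfun A B ks l = A + B * l.
  move=> lk; rewrite /plfun big_seq big1 ?addr0 // => k kin.
  by rewrite hingeE_le ?mulr0 // lk.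
have active l : (forall k, k \in ks -> k.2 <= l) ->
    plfun A B ks l = A + B * l + \sum_(k <- ks) k.1 * (l - k.2).
  move=> lk; rewrite /plfun !big_seq; congr (_ + _); apply: eq_bigr => k kin.
  by rewrite hingeE_ge // lk.
have h01 : 0 <= (1 : R) <= 1 by rewrite lexx ler01.
have h00 : 0 <= (0 : R) <= 1 by rewrite lexx ler01.
have A0 : A = 0.
  have f0E := inactive 0 (fun k kin => ltW (proj1 (andP (proj2 (kP k kin))))).
  by move: f0 (above 0 h00).1; rewrite f0E mulr0 addr0 => ? ?; apply/le_anti/andP.
have mass1 : B + \sum_(k <- ks) k.1 * (1 - k.2) = 1.
  have f1E := active 1 (fun k kin => ltW (proj2 (andP (proj2 (kP k kin))))).
  move: f1 (above 1 h01).2; rewrite f1E A0 add0r mulr1 => ? ?; apply/le_anti/andP.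
  by split; lra.
split=> //.
  have [l /andP[l0 l1] lk] := kinks_lower_bound gks.
  have := (above l (introT andP (conj (ltW l0) l1))).1; rewrite inactive // A0 add0r.
  by rewrite pmulr_lge0.
have [l /andP[l0 l1] lk] := kinks_upper_bound gks.
have := (above l (introT andP (conj l0 (ltW l1)))).2; rewrite active // A0 add0r.
have -> : \sum_(k <- ks) k.1 * (l - k.2) =
    l * \sum_(k <- ks) k.1 * (1 - k.2) - (1 - l) * \sum_(k <- ks) k.1 * k.2.
  by rewrite !mulr_sumr -sumrB; apply: eq_bigr => k _; ring.
have pos : 0 < 1 - l by rewrite subr_gt0.
move: mass1; nra.
Qed.

(* An experiment whose hinge function is plfun 0 B ks: the signal inl true
   reveals t1, inl false reveals t0, and the signal inr k has likelihood ratio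
   (1 - t_k) / t_k. *)
Definition hinge_exp (B : R) (ks : seq (R * R)) :
    Theta -> (bool + 'I_(size ks))%type -> R :=
  fun th e => match e with
  | inl true => if th == t1 then B else 0
  | inl false => if th == t1 then 0 else 1 - \sum_(k <- ks) k.1 * k.2
  | inr i => let k := nth (0, 0) ks i in
      if th == t1 then k.1 * (1 - k.2) else k.1 * k.2
  end.
Arguments hinge_exp B ks : clear implicits.

Lemma sum_hinge_exp_signals (ks : seq (R * R)) (F : (bool + 'I_(size ks))%type -> R) :
  \sum_e F e = F (inl true) + F (inl false) + \sum_(k < size ks) F (inr k).
Proof. by rewrite big_sumType /= big_bool. Qed.

Lemma sum_nth_kinks (ks : seq (R * R)) (G : R * R -> R) :
  \sum_(k < size ks) G (nth (0, 0) ks k) = \sum_(k <- ks) G k.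
Proof. by rewrite (big_nth (0, 0)) big_mkord. Qed.

Lemma hinge_exp_experiment (B : R) (ks : seq (R * R)) : good_kinks ks -> 0 <= B ->
  B + \sum_(k <- ks) k.1 * (1 - k.2) = 1 -> \sum_(k <- ks) k.1 * k.2 <= 1 ->
  experiment (hinge_exp B ks).
Proof.
move=> gks B0 mass1 mass0 th.
have kP (i : 'I_(size ks)) : 0 <= (nth (0, 0) ks i).1 /\ 0 < (nth (0, 0) ks i).2 < 1.
  by have /allP/(_ _ (mem_nth (0, 0) (ltn_ord i)))/andP[-> ->] := gks.
split=> [[[|]|i] /=|]; try by case: (th == t1); rewrite ?lexx //; lra.
  have [k1 /andP[k20 k21]] := kP i.
  by case: (th == t1); apply: mulr_ge0 => //; lra.
case: (theta_cases th) => ->; rewrite sum_hinge_exp_signals /=.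
  by rewrite (sum_nth_kinks ks (fun k => k.1 * k.2)); lra.
by rewrite (sum_nth_kinks ks (fun k => k.1 * (1 - k.2))); lra.
Qed.

(* Each signal contributes one term of plfun 0 B ks. *)
Lemma hingeV_hinge_exp (B : R) (ks : seq (R * R)) (l : R) : good_kinks ks -> 0 <= B ->
  \sum_(k <- ks) k.1 * k.2 <= 1 -> 0 <= l <= 1 ->
  hingeV (hinge_exp B ks) l = plfun 0 B ks l.
Proof.
move=> gks B0 mass0 /andP[l0 l1]; rewrite /hingeV sum_hinge_exp_signals /hinge_exp /=.
rewrite (sum_nth_kinks ks
  (fun k => Num.max 0 (l * (k.1 * (1 - k.2)) - (1 - l) * (k.1 * k.2)))).
rewrite /plfun mulr0 subr0 mulr0 sub0r add0r max_r ?mulr_ge0 // max_l; last first.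
  by rewrite oppr_le0; apply: mulr_ge0; lra.
rewrite addr0 mulrC; congr (_ + _); rewrite !big_seq; apply: eq_bigr => k kin.
have /allP/(_ k kin)/andP[k1 _] := gks.
by rewrite /hinge maxr_pMr // mulr0; congr (Num.max _ _); ring.
Qed.

End HingeRealization.
Arguments hinge_exp {R} B ks.

Section HingeSupremum.
Variables (R : realType) (m : nat) (Y : 'I_m -> finType).
Variable P : forall j : 'I_m, Theta -> Y j -> R.
Arguments P : clear implicits.
Hypothesis HP : forall j : 'I_m, experiment (P j).

(* Lines indexed by events: for an event T of P j, betting on t1 exactly on T
   gives the line l |-> sum_(y in T) (l P j t1 y - (1 - l) P j t0 y); the two
   extra lines l |-> 0 and l |-> 2 l - 1 bound every hinge function below. *)
Definition event_index : finType := (bool + {j : 'I_m & {set Y j}})%type.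

Definition event_p (i : event_index) : R :=
  match i with
  | inl b => if b then -1 else 0
  | inr t => - \sum_(y in tagged t) P (tag t) t0 y
  end.

Definition event_s (i : event_index) : R :=
  match i with
  | inl b => if b then 2 else 0
  | inr t => \sum_(y in tagged t) (P (tag t) t0 y + P (tag t) t1 y)
  end.

Lemma event_line t l : lin event_p event_s (inr t) l =
  \sum_(y in tagged t) (l * P (tag t) t1 y - (1 - l) * P (tag t) t0 y).
Proof.
by rewrite /lin /= big_distrl /= -sumrN -big_split /=; apply: eq_bigr => y _; ring.
Qed.

(* The hinge function of P j is the envelope of the lines of its events. *)
Lemma hinge_event_line j l : exists i, hingeV (P j) l = lin event_p event_s i l.
Proof.
exists (inr (Tagged (fun j => {set Y j}) [set y | 0 < l * P j t1 y - (1 - l) * P j t0 y])).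
rewrite event_line /hingeV [RHS]big_mkcond /=; apply: eq_bigr => y _; rewrite inE.
by case: ltP.
Qed.

Lemma event_line_le (Z : finType) (S : Theta -> Z -> R) l : experiment S ->
  (forall j, hingeV (P j) l <= hingeV S l) ->
  forall i, lin event_p event_s i l <= hingeV S l.
Proof.
move=> HS HPS [[|]|t]; have [S_ge0 S_ge] := hingeV_lower_bounds l HS.
- by rewrite /lin /=; lra.
- by rewrite /lin /= mul0r addr0.
rewrite event_line; apply: le_trans (HPS (tag t)).
rewrite /hingeV big_mkcond /=; apply: ler_sum => y _.
by case: (y \in tagged t); rewrite ?le_max ?lexx ?orbT.
Qed.

Lemma event_line_bounds i : lin event_p event_s i 0 <= 0 /\ lin event_p event_s i 1 <= 1.
Proof.
case: i => [[|]|t]; rewrite /lin /=.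
- by rewrite mulr0 mulr1; split; lra.
- by rewrite !mul0r !addr0 ler01.
have P0 y := (HP (tag t) t0).1 y; have [P1 sum1] := HP (tag t) t1.
split; first by rewrite mulr0 addr0 oppr_le0; apply: sumr_ge0.
rewrite mulr1 addrC -sumrB -sum1 big_mkcond /=; apply: ler_sum => y _.
by case: (y \in tagged t); rewrite ?P1 //; have := P0 y; lra.
Qed.

(* The P j have a Blackwell supremum: the experiment whose hinge function is
   the upper envelope of their hinge functions. *)
Lemma blackwell_sup_exists :
  exists (Z : finType) (E : Theta -> Z -> R), blackwell_sup P E.
Proof.
have cI : #|[set: event_index]| = (#|event_index|.-1).+1.
  by rewrite cardsT prednK //; apply/card_gt0P; exists (inl false).
have [A [B [ks [gks env]]]] := envelope_plfun event_p event_s cI.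
have env_le l i : 0 <= l <= 1 -> lin event_p event_s i l <= plfun A B ks l.
  by move=> hl; have [_ ->] := env l hl; rewrite ?inE.
have env_eq l : 0 <= l <= 1 -> exists i, lin event_p event_s i l = plfun A B ks l.
  by move=> hl; have [[i _ <-] _] := env l hl; exists i.
have [A0 B0 mass1 mass0] : [/\ A = 0, 0 <= B, B + \sum_(k <- ks) k.1 * (1 - k.2) = 1
    & \sum_(k <- ks) k.1 * k.2 <= 1].
  apply: plfun_hinge_shape => // [l hl||].
  - have := env_le l (inl false) hl; have := env_le l (inl true) hl.
    by rewrite /lin /=; split; lra.
  - by have [i <-] := env_eq 0 (introT andP (conj (lexx _) ler01)); case: (event_line_bounds i).
  - by have [i <-] := env_eq 1 (introT andP (conj ler01 (lexx _))); case: (event_line_bounds i).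
have HE := hinge_exp_experiment gks B0 mass1 mass0.
have hE l : 0 <= l <= 1 -> hingeV (hinge_exp B ks) l = plfun A B ks l.
  by move=> hl; rewrite A0 hingeV_hinge_exp.
exists _, (hinge_exp B ks); split=> //; split=> [j|Z S HS HSP].
  apply: informative_of_hinge => // l hl; rewrite hE //.
  by have [i ->] := hinge_event_line j l; apply: env_le.
apply: informative_of_hinge => // l hl; rewrite hE //.
have [i <-] := env_eq l hl; apply: event_line_le => // j.
exact: hinge_of_informative (HSP j).
Qed.

End HingeSupremum.

Section KernelSpace.
Variables (R : realType) (Z Y : finType).
Local Open Scope classical_set_scope.

(* Kernels Z -> Y -> R are encoded as row vectors indexed by Z * Y, which
   carry the product topology. *)
Let n := #|{: Z * Y}|.

Definition kernel_of (v : 'rV[R]_n) : Z -> Y -> R := fun z y => v ord0 (enum_rank (z, y)).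

Definition row_of_kernel (K : Z -> Y -> R) : 'rV[R]_n :=
  \row_i K (enum_val i).1 (enum_val i).2.

Lemma kernel_of_row K : kernel_of (row_of_kernel K) = K.
Proof.
by apply/boolp.funext => z; apply/boolp.funext => y; rewrite /kernel_of mxE enum_rankK.
Qed.

Lemma kernel_of_continuous z y : continuous (fun v => kernel_of v z y).
Proof. exact: coord_continuous. Qed.

Lemma continuous_sum (T : topologicalType) (I : Type) (r : seq I) (F : I -> T -> R) :
  (forall i, continuous (F i)) -> continuous (fun x => \sum_(i <- r) F i x).
Proof.
by move=> H x; apply: (@cvg_big R I +%R 0 xpredT add_continuous) => // i _; apply: H.
Qed.

Lemma continuous_mul (T : topologicalType) (f g : T -> R) :
  continuous f -> continuous g -> continuous (fun x => f x * g x).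
Proof. by move=> cf cg x; apply: cvgM; [apply: cf | apply: cg]. Qed.

Lemma continuous_sub (T : topologicalType) (f g : T -> R) :
  continuous f -> continuous g -> continuous (fun x => f x - g x).
Proof. by move=> cf cg x; apply: cvgB; [apply: cf | apply: cg]. Qed.

(* The stochastic kernels, as a set of row vectors: entries in [0, 1] and
   row sums equal to 1 (the latter written as one closed equation). *)
Definition stochastic_rows : set 'rV[R]_n :=
  [set v : 'rV[R]_n | forall i, `[0, 1] (v ord0 i)] `&`
  [set v | \sum_z (\sum_y kernel_of v z y - 1) ^+ 2 = 0].

Lemma stochastic_le1 (K : Z -> Y -> R) z y : stochastic K -> K z y <= 1.
Proof.
move=> HK; have [K0 K1] := HK z; rewrite -K1 (bigD1 y) //= lerDl.
by apply: sumr_ge0 => y' _; apply: K0.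
Qed.

Lemma stochastic_rows_of K : stochastic K -> stochastic_rows (row_of_kernel K).
Proof.
move=> HK; split=> [i|].
  rewrite /= in_itv /= mxE; have [K0 _] := HK (enum_val i).1.
  by rewrite K0 stochastic_le1.
by rewrite /= kernel_of_row big1 // => z _; have [_ ->] := HK z; rewrite subrr expr0n.
Qed.

Lemma stochastic_rowsP v : stochastic_rows v -> stochastic (kernel_of v).
Proof.
move=> [box sum1] z; split=> [y|].
  by have := box (enum_rank (z, y)); rewrite /= in_itv /= => /andP[].
move/eqP: sum1; rewrite psumr_eq0 => [/allP/(_ z (mem_index_enum z))|z' _]; last first.
  exact: sqr_ge0.
by rewrite implyTb sqrf_eq0 subr_eq0 => /eqP.
Qed.

Lemma stochastic_rows_compact : compact stochastic_rows.
Proof.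
have box : compact [set v : 'rV[R]_n | forall i, `[0, 1] (v ord0 i)].
  exact: (@rV_compact R n (fun=> `[0, 1]) (fun _ => @segment_compact R 0 1)).
apply: (subclosed_compact _ box); last by move=> v [].
apply: closedI; first by apply: compact_closed => //; apply: norm_hausdorff.
apply: (@preimage_closed _ R (fun v => \sum_z (\sum_y kernel_of v z y - 1) ^+ 2) [set 0]).
  move=> v _; apply: continuous_sum => z; rewrite /GRing.exp /=.
  by apply: continuous_mul; apply: continuous_sub; try apply: cst_continuous;
    apply: continuous_sum => y; apply: kernel_of_continuous.
exact: closed_eq.
Qed.

End KernelSpace.

Section BlackwellGarbling.
Variables (R : realType) (Z Y : finType) (S : Theta -> Z -> R) (Q : Theta -> Y -> R).

Definition sqdist (K : Z -> Y -> R) : R := \sum_th \sum_y (Q th y - garble S K th y) ^+ 2.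

Lemma sqdist_continuous : continuous (fun v : 'rV[R]_#|{: Z * Y}| => sqdist (kernel_of v)).
Proof.
apply: continuous_sum => th; apply: continuous_sum => y; rewrite /GRing.exp /=.
by apply: continuous_mul; apply: continuous_sub; try apply: cst_continuous;
  apply: continuous_sum => z; apply: continuous_mul; try apply: cst_continuous;
  apply: kernel_of_continuous.
Qed.

(* By compactness, some stochastic kernel minimizes the distance. *)
Lemma sqdist_min : (0 < #|Y|)%N ->
  exists2 K, stochastic K & forall K', stochastic K' -> sqdist K <= sqdist K'.
Proof.
case/card_gt0P=> y0 _.
have nonempty : (@stochastic_rows R Z Y !=set0)%classic.
  by exists (row_of_kernel (pure (fun=> y0))); apply/stochastic_rows_of/pure_stochastic.
have [v vC vmin] := compact_EVT_min nonempty (@stochastic_rows_compact R Z Y)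
  (continuous_subspaceT sqdist_continuous).
rewrite in_setE in vC; exists (kernel_of v); first exact: stochastic_rowsP.
move=> K' HK'; have := vmin (row_of_kernel K').
by rewrite in_setE kernel_of_row => /(_ (stochastic_rows_of HK')).
Qed.

Lemma psum_le0 (I : finType) (F : I -> R) :
  (forall i, 0 <= F i) -> \sum_i F i <= 0 -> forall i, F i = 0.
Proof.
move=> F0 sum_le0; have sum0 : \sum_i F i = 0 by apply/le_anti; rewrite sum_le0 sumr_ge0.
by move=> i; apply: (psumr_eq0P (fun i _ => F0 i) sum0).
Qed.

Lemma sum2_quadratic (F G H : Theta -> Y -> R) (e : R) :
  \sum_th \sum_y (F th y - 2 * e * G th y + e ^+ 2 * H th y) =
  \sum_th \sum_y F th y - 2 * e * (\sum_th \sum_y G th y) + e ^+ 2 * (\sum_th \sum_y H th y).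
Proof.
rewrite !mulr_sumr -sumrB -big_split /=; apply: eq_bigr => th _.
by rewrite !mulr_sumr -sumrB -big_split.
Qed.

(* First-order optimality of a minimizer K: moving towards any stochastic s
   does not decrease the distance, so the residual Q - S K is "orthogonal
   from above" to S s - S K. *)
Lemma sqdist_variational K : stochastic K ->
  (forall K', stochastic K' -> sqdist K <= sqdist K') ->
  forall s, stochastic s ->
  \sum_th \sum_y (Q th y - garble S K th y) * (garble S s th y - garble S K th y) <= 0.
Proof.
move=> HK Kmin s Hs.
pose d th y := Q th y - garble S K th y.
pose D th y := garble S s th y - garble S K th y.
pose a := \sum_th \sum_y d th y * D th y.
pose b := \sum_th \sum_y D th y ^+ 2.
have b0 : 0 <= b by apply: sumr_ge0 => th _; apply: sumr_ge0 => y _; apply: sqr_ge0.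
have mixE e : sqdist (fun z y => (1 - e) * K z y + e * s z y) = sqdist K - 2 * e * a + e ^+ 2 * b.
  rewrite /sqdist /a /b -sum2_quadratic; apply: eq_bigr => th _; apply: eq_bigr => y _.
  have -> : garble S (fun z y => (1 - e) * K z y + e * s z y) th y = garble S K th y + e * D th y.
    rewrite /D /garble mulrBr !mulr_sumr -sumrB -big_split /=.
    by apply: eq_bigr => z _; ring.
  by rewrite /d; ring.
have mix_stochastic e : 0 <= e <= 1 -> stochastic (fun z y => (1 - e) * K z y + e * s z y).
  move=> /andP[e0 e1] z; have [K0 K1] := HK z; have [s0 s1] := Hs z; split=> [y|].
    by apply: addr_ge0; apply: mulr_ge0 => //; lra.
  by rewrite big_split /= -!mulr_sumr K1 s1; ring.
(* If a > 0, the mixture with weight e = a / (a + b) would be strictly closer. *)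
rewrite -/d -/D -/a leNgt; apply/negP => a_pos.
pose e := a / (a + b).
have ab : 0 < a + b by lra.
have e0 : 0 < e by apply: divr_gt0.
have e1 : e <= 1 by rewrite ler_pdivrMr // mul1r; lra.
have eab : e * (a + b) = a by rewrite /e mulfVK // gt_eqF.
have := Kmin _ (mix_stochastic e (introT andP (conj (ltW e0) e1))); rewrite mixE.
nra.
Qed.

Lemma payoff_as_garble (u : Theta -> Y -> R) (sigma : Z -> Y -> R) :
  payoff S u sigma = \sum_th \sum_y garble S sigma th y * u th y.
Proof.
rewrite /payoff; apply: eq_bigr => th _; rewrite /garble; under [RHS]eq_bigr do rewrite mulr_suml.
rewrite exchange_big /=; apply: eq_bigr => z _.
by rewrite mulr_sumr; apply: eq_bigr => y _; rewrite mulrA.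
Qed.

(* The
   garbling closest to Q leaves a residual d = Q - S K; in the decision problem
   with utility d, reporting the signal of Q earns sum Q d, which S must match,
   and optimality of K forces sum d^2 <= 0. *)
Theorem blackwell_garbling : experiment Q -> more_informative S Q ->
  exists2 K, stochastic K & Q = garble S K.
Proof.
move=> HQ SQ.
have cY : (0 < #|Y|)%N. (* Q t0 is a distribution on Y *)
  apply/card_gt0P; case: (pickP (fun _ : Y => true)) => [y _|none]; first by exists y.
  by have [_] := HQ t0; rewrite big_pred0 // => /esym/eqP; rewrite oner_eq0.
have [K HK Kmin] := sqdist_min cY.
pose d th y := Q th y - garble S K th y.
have [sigma Hsigma valS] := value_attained S d cY.
have truthful : \sum_th \sum_y Q th y * d th y <= value Q d.
  have <- : payoff Q d (pure id) = \sum_th \sum_y Q th y * d th y.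
    by apply: eq_bigr => th _; apply: eq_bigr => y _; rewrite sum_pure.
  by apply: (payoff_le_value Q d cY); apply: pure_stochastic.
have dominated := SQ Y cY d; rewrite valS payoff_as_garble in dominated.
have orth := sqdist_variational HK Kmin Hsigma; rewrite -/d in orth.
have sq_le0 : \sum_th \sum_y d th y ^+ 2 <= 0.
  suff -> : \sum_th \sum_y d th y ^+ 2 = \sum_th \sum_y Q th y * d th y
      - \sum_th \sum_y garble S sigma th y * d th y
      + \sum_th \sum_y d th y * (garble S sigma th y - garble S K th y) by lra.
  rewrite -sumrB -big_split /=; apply: eq_bigr => th _.
  by rewrite -sumrB -big_split /=; apply: eq_bigr => y _; rewrite /d; ring.
have row_ge0 th : 0 <= \sum_y d th y ^+ 2 by apply: sumr_ge0 => y _; apply: sqr_ge0.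
exists K => //; apply/boolp.funext => th; apply/boolp.funext => y.
have row0 := psum_le0 row_ge0 sq_le0 th.
have row_le0 : \sum_y d th y ^+ 2 <= 0 by rewrite row0.
have /eqP := psum_le0 (fun y => sqr_ge0 (d th y)) row_le0 y.
by rewrite sqrf_eq0 subr_eq0 => /eqP.
Qed.

End BlackwellGarbling.

Section ProductKernel.
Variables (R : realType) (m : nat) (Y : 'I_m -> finType).

Lemma sum_prodY (G : forall j, Y j -> R) :
  \sum_(y : prodY Y) \prod_j G j (y j) = \prod_j \sum_(x : Y j) G j x.
Proof.
rewrite (reindex (@dffun_of_fprod _ Y)) /=; last first.
  by apply: onW_bij; apply: dffun_of_fprod_bij.
pose G' j := [ffun x => G j x].
transitivity (\sum_(t : fprod Y | predT (fprod_fun t)) \prod_(j : 'I_m) G' j (t j)).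
  by apply: eq_bigr => t _; apply: eq_bigr => j _; rewrite !ffunE.
rewrite (big_fprod_dep (1 : R) +%R G' predT) /=.
rewrite (eq_bigl (fun g => g \in family (tagged_with Y))); last by move=> g; rewrite andbT.
rewrite -(bigA_distr_big_dep (fun i => tagged_with Y i) (fun i j => untag 0 (G' i) j)).
apply: eq_bigr => i _; rewrite (big_tag (fun j => G j)).
apply: eq_big => // x _; rewrite /G' /untag; case: eqP => // e; by rewrite ffunE.
Qed.

Variables (Z : finType) (K : forall j, Z -> Y j -> R).
Arguments K : clear implicits.
Hypothesis HK : forall j, stochastic (K j).

Definition prod_kernel : Z -> prodY Y -> R := fun z y => \prod_j K j z (y j).

Lemma prod_kernel_stochastic : stochastic prod_kernel.
Proof.
move=> z; split=> [y|]; first by apply: prodr_ge0 => j _; case: (HK j z) => + _; apply.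
by rewrite /prod_kernel (sum_prodY (fun j x => K j z x)) big1 // => j _; case: (HK j z).
Qed.

Lemma prod_kernel_marginal z j0 (yj : Y j0) :
  \sum_(y : prodY Y | y j0 == yj) prod_kernel z y = K j0 z yj.
Proof.
pose G j (x : Y j) := K j z x * ((Tagged Y x == Tagged Y yj) || (j != j0))%:R.
have tagE (x : Y j0) : (Tagged Y x == Tagged Y yj) = (x == yj).
  by apply/eqP/eqP => [hT|->]; [exact: eq_from_Tagged hT|].
transitivity (\sum_(y : prodY Y) \prod_j G j (y j)).
  rewrite big_mkcond /=; apply: eq_bigr => y _.
  rewrite /G big_split /= /prod_kernel [X in _ * X](bigD1 j0) //= [X in _ * (_ * X)]big1.
    by rewrite eqxx orbF mulr1 tagE; case: (y j0 == yj); rewrite ?mulr1 ?mulr0.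
  by move=> j /negbTE ->; rewrite orbT.
rewrite sum_prodY (bigD1 j0) //= [X in _ * X]big1 ?mulr1.
  rewrite (bigD1 yj) //= /G eqxx orTb mulr1 big1 ?addr0 // => x /negbTE xne.
  by rewrite tagE xne eqxx /= mulr0.
move=> j /negbTE jne; rewrite /G; under eq_bigr do rewrite jne orbT mulr1.
by case: (HK j z).
Qed.

End ProductKernel.

Section Couplings.
Variables (R : realType) (m : nat) (Y : 'I_m -> finType).
Variable P : forall j : 'I_m, Theta -> Y j -> R.
Arguments P : clear implicits.

(* Every coupling dominates each of its marginals, which are garblings of it
   by the coordinate projections. *)
Lemma coupling_informative (Q : Theta -> prodY Y -> R) :
  in_couplings P Q -> forall j, more_informative Q (P j).
Proof.
move=> [_ marg] j.
have -> : P j = garble Q (pure (fun y : prodY Y => y j)).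
  apply/boolp.funext => th; apply/boolp.funext => x; rewrite -marg big_mkcond /=.
  rewrite /garble; apply: eq_bigr => y _; rewrite /pure /= eq_sym.
  by case: (x == y j); rewrite ?mulr1 ?mulr0.
exact/informative_garble/pure_stochastic.
Qed.

Lemma coupling_prod_kernel (Z : finType) (E : Theta -> Z -> R) (K : forall j, Z -> Y j -> R) :
  experiment E -> (forall j, stochastic (K j)) -> (forall j, P j = garble E (K j)) ->
  in_couplings P (garble E (prod_kernel K)).
Proof.
move=> HE HK PE; split; first exact: (garble_experiment (prod_kernel_stochastic HK) HE).
move=> th j yj; rewrite PE /garble exchange_big /=; apply: eq_bigr => z _.
by rewrite -mulr_sumr prod_kernel_marginal.
Qed.

End Couplings.

Theorem lemma3 (R : realType) (m : nat) (Y : 'I_m -> finType)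
  (P : forall j : 'I_m, Theta -> Y j -> R) :
  (forall j, experiment (P j)) ->
  exists Pbar : Theta -> prodY Y -> R,
    in_couplings P Pbar /\
    blackwell_sup P Pbar /\
    (forall (A : finType), (0 < #|A|)%N -> forall (u : Theta -> A -> R)
       (Q : Theta -> prodY Y -> R),
       in_couplings P Q -> value Pbar u <= value Q u).
Proof.
move=> HP.
have [Z [E [HE [EP Eleast]]]] := blackwell_sup_exists HP.
have [K HK] : exists K : forall j, Z -> Y j -> R,
    forall j, stochastic (K j) /\ P j = garble E (K j).
  apply: (@fin_all_exists _ (fun j => Z -> Y j -> R)
    (fun j Kj => stochastic Kj /\ P j = garble E Kj)) => j.
  by have [Kj HKj PKj] := blackwell_garbling (HP j) (EP j); exists Kj.
pose Pbar := garble E (prod_kernel K).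
have Pbar_coupling : in_couplings P Pbar.
  by apply: coupling_prod_kernel => // j; case: (HK j).
have Pbar_least (Z' : finType) (S : Theta -> Z' -> R) : experiment S ->
    (forall j, more_informative S (P j)) -> more_informative S Pbar.
  move=> HS SP; apply: informative_trans (Eleast _ _ HS SP) _.
  by apply/informative_garble/prod_kernel_stochastic => j; case: (HK j).
exists Pbar; split=> //; split.
  by split; [case: Pbar_coupling | split; [apply: coupling_informative|]].
move=> A cA u Q HQ; apply: (Pbar_least _ Q) => //; first by case: HQ.
exact: coupling_informative.
Qed.
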